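(* Let $R_1,R_2$ be commutative rings with nonzero identity, let $I_1$ be a proper ideal of $R_1$ and $I_2$ a proper ideal of $R_2$, and put $R=R_1\times R_2$, $I=I_1\times I_2$. Then: (a) If at least one of the graphs $\Gamma''_{I_1}(R_1)$, $\Gamma''_{I_2}(R_2)$ is not totally disconnected (i.e. has at least one edge), then the girth of $\Gamma''_I(R)$ equals $3$. (b) If $R_1\setminus I_1\neq\{1_{R_1}\}$ and $R_2\setminus I_2\neq\{1_{R_2}\}$, then the girth of $\Gamma''_I(R)$ is at most $4$.
   Context: $R_1\times R_2$ has componentwise operations. For a commutative ring $S$ and an ideal $J$ of $S$, $\Gamma''_J(S)$ is the simple undirected graph whose vertex set is $\{x\in S\setminus J : xS+J\neq S\}$, and two distinct vertices $x,y$ are adjacent if and only if $x\notin yS+J$ and $y\notin xS+J$. A graph is totally disconnected if it has no edges. The girth of a graph is the length of a shortest cycle (and $\infty$ if there is no cycle). *)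

From HB Require Import structures.
From mathcomp Require Import all_boot all_algebra.
Set Implicit Arguments. Unset Strict Implicit. Unset Printing Implicit Defensive.
Import GRing.Theory.
Local Open Scope ring_scope.

Definition is_ideal_pred (S : comNzRingType) (J : S -> Prop) : Prop :=
  [/\ J 0,
      (forall a b, J a -> J b -> J (a + b)),
      (forall a, J a -> J (- a)) &
      (forall s a, J a -> J (s * a))].

Definition proper_ideal_pred (S : comNzRingType) (J : S -> Prop) : Prop :=
  is_ideal_pred J /\ ~ J 1.

Definition in_xSJ (S : comNzRingType) (J : S -> Prop) (x z : S) : Prop :=
  exists s j, J j /\ z = x * s + j.

(* Vertices of Gamma''_J(S): x \notin J and xS + J <> S. *)
Definition gvert (S : comNzRingType) (J : S -> Prop) (x : S) : Prop :=
  ~ J x /\ ~ (forall z, in_xSJ J x z).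

(* Adjacency in Gamma''_J(S) (simple graph: distinct vertices). *)
Definition gadj (S : comNzRingType) (J : S -> Prop) (x y : S) : Prop :=
  [/\ gvert J x, gvert J y, x <> y, ~ in_xSJ J y x & ~ in_xSJ J x y].

Definition totally_disconnected (T : Type) (V : T -> Prop) (E : T -> T -> Prop) :=
  forall x y, V x -> V y -> ~ E x y.

Definition is_cycle (T : Type) (V : T -> Prop) (E : T -> T -> Prop)
  (n : nat) (f : nat -> T) : Prop :=
  [/\ (3 <= n)%N,
      (forall i, (i < n)%N -> V (f i)),
      (forall i j, (i < j < n)%N -> f i <> f j) &
      (forall i, (i < n)%N -> E (f i) (f (i.+1 %% n)%N))].

Definition has_cycle_of_length (T : Type) (V : T -> Prop) (E : T -> T -> Prop)
  (n : nat) : Prop := exists f, is_cycle V E n f.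

Definition girth_eq (T : Type) (V : T -> Prop) (E : T -> T -> Prop) (n : nat) :=
  has_cycle_of_length V E n /\ forall m, has_cycle_of_length V E m -> (n <= m)%N.

(* girth <= n (girth is infinity when there is no cycle) *)
Definition girth_le (T : Type) (V : T -> Prop) (E : T -> T -> Prop) (n : nat) :=
  exists m, (m <= n)%N /\ has_cycle_of_length V E m.

Definition prod_ideal (R1 R2 : comNzRingType) (I1 : R1 -> Prop) (I2 : R2 -> Prop)
  : R1 * R2 -> Prop := fun p => I1 p.1 /\ I2 p.2.

(* Write [R = R1 * R2] and [I = I1 * I2].  An element [(u, 0)] with [u]
   outside [I1] is a vertex, because [(0, 1)] is not in [(u, 0)R + I], and it
   is adjacent to every [(0, v)] with [v] outside [I2], since the two lie in
   complementary coordinates.  An edge [x -- y] of [Gamma''_I1(R1)] lifts to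
   the edge [(x, 0) -- (y, 0)], and together with [(0, 1)] gives a triangle.
   Elements [a] outside [I1] and [b] outside [I2], different from the
   identities, give the square [(1, 0) -- (0, 1) -- (a, 0) -- (0, b)]. *)
From HB Require Import structures.
From mathcomp Require Import all_boot all_algebra.
From Stdlib Require Import Classical.
Set Implicit Arguments. Unset Strict Implicit. Unset Printing Implicit Defensive.
Import GRing.Theory.
Local Open Scope ring_scope.

Section Cycles.
Variables (T : eqType) (V : T -> Prop) (E : T -> T -> Prop).
Hypothesis edge_vertex : forall x y, E x y -> V x.

Lemma has_cycle_of_seq (x0 : T) (s : seq T) :
  (3 <= size s)%N -> uniq s ->
  (forall i, (i < size s)%N -> E (nth x0 s i) (nth x0 s (i.+1 %% size s))) ->
  has_cycle_of_length V E (size s).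
Proof.
move=> size_s uniq_s edges; exists (nth x0 s); split=> //.
- by move=> i /edges /edge_vertex.
- move=> i j /andP[lt_ij lt_js] /eqP.
  by rewrite nth_uniq ?(ltn_trans lt_ij) // ltn_eqF.
Qed.

Lemma has_cycle3 (a b c : T) :
  uniq [:: a; b; c] -> E a b -> E b c -> E c a -> has_cycle_of_length V E 3.
Proof.
move=> uniq_abc ab bc ca.
by apply: (@has_cycle_of_seq a [:: a; b; c]) => // -[|[|[|i]]].
Qed.

Lemma has_cycle4 (a b c d : T) :
  uniq [:: a; b; c; d] -> E a b -> E b c -> E c d -> E d a ->
  has_cycle_of_length V E 4.
Proof.
move=> uniq_abcd ab bc cd da.
by apply: (@has_cycle_of_seq a [:: a; b; c; d]) => // -[|[|[|[|i]]]].
Qed.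

End Cycles.

Lemma girth_eq3 (T : Type) (V : T -> Prop) (E : T -> T -> Prop) :
  has_cycle_of_length V E 3 -> girth_eq V E 3.
Proof. by move=> cycle3; split=> // m [f []]. Qed.

Lemma edge_of_not_totally_disconnected (T : Type) (V : T -> Prop)
    (E : T -> T -> Prop) :
  ~ totally_disconnected V E -> exists x y, E x y.
Proof.
move=> not_td; apply: NNPP => no_edge; apply: not_td => x y _ _ exy.
by apply: no_edge; exists x, y.
Qed.

Section OneRing.
Variables (S : comNzRingType) (J : S -> Prop).

Lemma in_xSJ0 z : in_xSJ J 0 z -> J z.
Proof. by move=> [s [j [Jj ->]]]; rewrite mul0r add0r. Qed.

Lemma gadj_gvert x y : gadj J x y -> gvert J x.
Proof. by case. Qed.

Lemma gadj_sym x y : gadj J x y -> gadj J y x.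
Proof. by case=> Vx Vy /nesym neq_yx yx xy. Qed.

Hypothesis properJ : proper_ideal_pred J.

Lemma proper_ideal_not1 : ~ J 1.
Proof. by case: properJ. Qed.

Lemma proper_ideal_neq0 x : ~ J x -> x != 0.
Proof. by apply: contra_notN => /eqP ->; case: properJ => -[]. Qed.

Lemma exists_outside_neq1 :
  ~ (forall x : S, ~ J x <-> x = 1) -> exists2 a, ~ J a & a != 1.
Proof.
move=> not_only1; apply: NNPP => no_a; apply: not_only1 => x; split=> [Jx|->].
  by apply: NNPP => x_neq1; apply: no_a; exists x => //; apply/eqP.
exact: proper_ideal_not1.
Qed.

End OneRing.

Section Product.
Variables (R1 R2 : comNzRingType) (I1 : R1 -> Prop) (I2 : R2 -> Prop).
Hypotheses (properI1 : proper_ideal_pred I1) (properI2 : proper_ideal_pred I2).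
Let I := prod_ideal I1 I2.

Lemma in_xSJ_fst x z : in_xSJ I x z -> in_xSJ I1 x.1 z.1.
Proof. by move=> [s [j [[Ij1 _] ->]]]; exists s.1, j.1. Qed.

Lemma in_xSJ_snd x z : in_xSJ I x z -> in_xSJ I2 x.2 z.2.
Proof. by move=> [s [j [[_ Ij2] ->]]]; exists s.2, j.2. Qed.

Lemma gvert_inl u : ~ I1 u -> gvert I (u, 0).
Proof.
move=> I1u; split=> [[]//|/(_ (0, 1)) /in_xSJ_snd /in_xSJ0].
exact: proper_ideal_not1.
Qed.

Lemma gvert_inr v : ~ I2 v -> gvert I (0, v).
Proof.
move=> I2v; split=> [[]//|/(_ (1, 0)) /in_xSJ_fst /in_xSJ0].
exact: proper_ideal_not1.
Qed.

Lemma gadj_inl_inr u v : ~ I1 u -> ~ I2 v -> gadj I (u, 0) (0, v).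
Proof.
move=> I1u I2v; split; [exact: gvert_inl | exact: gvert_inr | | |].
- by case=> /eqP; rewrite (negbTE (proper_ideal_neq0 properI1 I1u)).
- by move/in_xSJ_fst/in_xSJ0.
- by move/in_xSJ_snd/in_xSJ0.
Qed.

Lemma gadj_inl x y : gadj I1 x y -> gadj I (x, 0) (y, 0).
Proof.
case=> -[I1x _] [I1y _] neq_xy yx xy.
split; [exact: gvert_inl | exact: gvert_inl | by case | |].
- by move/in_xSJ_fst.
- by move/in_xSJ_fst.
Qed.

Lemma gadj_inr x y : gadj I2 x y -> gadj I (0, x) (0, y).
Proof.
case=> -[I2x _] [I2y _] neq_xy yx xy.
split; [exact: gvert_inr | exact: gvert_inr | by case | |].
- by move/in_xSJ_snd.
- by move/in_xSJ_snd.
Qed.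

Lemma has_triangle_inl x y :
  gadj I1 x y -> has_cycle_of_length (gvert I) (gadj I) 3.
Proof.
move=> exy; have [[I1x _] [I1y _] /eqP neq_xy _ _] := exy.
have n2 := proper_ideal_not1 properI2.
apply: (@has_cycle3 _ _ _ (@gadj_gvert _ I) (x, 0) (y, 0) (0, 1)).
- by rewrite /= !inE !xpair_eqE eqxx (eq_sym 0 1) oner_eq0 !andbF !andbT orbF.
- exact: gadj_inl.
- exact: gadj_inl_inr I1y n2.
- exact: gadj_sym (gadj_inl_inr I1x n2).
Qed.

Lemma has_triangle_inr x y :
  gadj I2 x y -> has_cycle_of_length (gvert I) (gadj I) 3.
Proof.
move=> exy; have [[I2x _] [I2y _] /eqP neq_xy _ _] := exy.
have n1 := proper_ideal_not1 properI1.
apply: (@has_cycle3 _ _ _ (@gadj_gvert _ I) (0, x) (0, y) (1, 0)).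
- by rewrite /= !inE !xpair_eqE eqxx (eq_sym 0 1) oner_eq0 orbF /= andbT.
- exact: gadj_inr.
- exact: gadj_sym (gadj_inl_inr n1 I2y).
- exact: gadj_inl_inr n1 I2x.
Qed.

Lemma has_square a b : ~ I1 a -> a != 1 -> ~ I2 b -> b != 1 ->
  has_cycle_of_length (gvert I) (gadj I) 4.
Proof.
move=> I1a a_neq1 I2b b_neq1.
have n1 := proper_ideal_not1 properI1; have n2 := proper_ideal_not1 properI2.
apply: (@has_cycle4 _ _ _ (@gadj_gvert _ I) (1, 0) (0, 1) (a, 0) (0, b)).
- have a_neq0 := proper_ideal_neq0 properI1 I1a.
  rewrite /= !inE !xpair_eqE !oner_eq0 !eqxx !andbF (eq_sym 1 a) (eq_sym 1 b).
  by rewrite (negbTE a_neq1) (negbTE b_neq1) (negbTE a_neq0).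
- exact: gadj_inl_inr n1 n2.
- exact: gadj_sym (gadj_inl_inr I1a n2).
- exact: gadj_inl_inr I1a I2b.
- exact: gadj_sym (gadj_inl_inr n1 I2b).
Qed.

End Product.

Theorem proposition2p8 (R1 R2 : comNzRingType) (I1 : R1 -> Prop) (I2 : R2 -> Prop) :
  proper_ideal_pred I1 -> proper_ideal_pred I2 ->
  ((~ totally_disconnected (gvert I1) (gadj I1) \/
    ~ totally_disconnected (gvert I2) (gadj I2)) ->
     girth_eq (gvert (prod_ideal I1 I2)) (gadj (prod_ideal I1 I2)) 3) /\
  ((~ (forall x : R1, ~ I1 x <-> x = 1)) ->
   (~ (forall x : R2, ~ I2 x <-> x = 1)) ->
     girth_le (gvert (prod_ideal I1 I2)) (gadj (prod_ideal I1 I2)) 4).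
Proof.
move=> P1 P2; split.
  move=> [] /edge_of_not_totally_disconnected [x [y exy]]; apply: girth_eq3.
  - exact: has_triangle_inl exy.
  - exact: has_triangle_inr exy.
move=> /(exists_outside_neq1 P1) [a I1a a_neq1].
move=> /(exists_outside_neq1 P2) [b I2b b_neq1].
by exists 4%N; split; last exact: has_square I1a a_neq1 I2b b_neq1.
Qed.
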